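(* Let $X\in\mathrm{St}(n,k)$ and $\xi=(\xi_1,\xi_2)\in\mathfrak{so}(n)\times\mathfrak{so}(k)$. The horizontal lift through $q(0)=(I_n,I_k)$ of $\widehat\beta(t)=(\iota_X\circ\pi)(\exp(t\xi))=e^{t\xi_1}Xe^{-t\xi_2}$ is $$q(t)=\exp(t\xi)\exp(-t\xi_{\mathfrak h})=\big(e^{t\xi_1}e^{-t\xi_{1,\mathfrak h}},\,e^{t\xi_2}e^{-t\xi_{2,\mathfrak h}}\big),$$ and it is the solution of $\dot q(t)=d_{(I_n,I_k)}L_{q(t)}\,\mathrm{Ad}_{\exp(t\xi_{\mathfrak h})}(\xi_{\mathfrak p})$, $q(0)=(I_n,I_k)$.
   Context: $\mathrm{St}(n,k)=\{Y\in\mathbb{R}^{n\times k}:Y^\top Y=I_k\}$; $G=O(n)\times O(k)$ acts by $(R,\theta)\cdot Y=RY\theta^\top$, $H$ is the stabilizer of $X$, $\pi\colon G\to G/H$, $\iota_X((R,\theta)H)=RX\theta^\top$. On $\mathfrak g=\mathfrak{so}(n)\times\mathfrak{so}(k)$ the scalar product is $\langle(\Omega_1,\Psi_1),(\Omega_2,\Psi_2)\rangle=-\operatorname{tr}(\Omega_1\Omega_2)+2\operatorname{tr}(\Psi_1\Psi_2)$; $\mathfrak h=\{(\Omega,\eta):\Omega X=X\eta\}$, $\mathfrak p=\mathfrak h^\perp$, $\mathfrak g=\mathfrak h\oplus\mathfrak p$, and $\xi_{\mathfrak h}=(\xi_{1,\mathfrak h},\xi_{2,\mathfrak h})$, $\xi_{\mathfrak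 p}$ are the components of $\xi$. A horizontal lift of $\widehat\beta$ is a curve $q$ in $G$ with $(\iota_X\circ\pi)(q(t))=\widehat\beta(t)$ and $q(t)^{-1}\dot q(t)\in\mathfrak p$. *)

From HB Require Import structures.
From mathcomp Require Import all_boot all_order all_algebra.
From mathcomp Require Import all_classical all_reals all_analysis.
Set Implicit Arguments. Unset Strict Implicit. Unset Printing Implicit Defensive.
Import Order.TTheory GRing.Theory Num.Theory.
Import numFieldNormedType.Exports.
Local Open Scope ring_scope.

Section Defs.
Variable R : realType.

Definition expm (n : nat) (A : 'M[R]_n) : 'M[R]_n :=
  limn (series (fun k : nat => (k`!%:R)^-1 *: (A ^+ k))).

Definition skew_sym (n : nat) (A : 'M[R]_n) : Prop := A^T = - A.

Definition orth (n : nat) (M : 'M[R]_n) : Prop := M^T *m M = 1%:M.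

Definition stiefel (n k : nat) (Y : 'M[R]_(n, k)) : Prop := Y^T *m Y = 1%:M.

Definition gip (n k : nat) (O1 : 'M[R]_n) (P1 : 'M[R]_k) (O2 : 'M[R]_n) (P2 : 'M[R]_k) : R :=
  - \tr (O1 *m O2) + 2 * \tr (P1 *m P2).

Definition in_g (n k : nat) (O : 'M[R]_n) (P : 'M[R]_k) : Prop := skew_sym O /\ skew_sym P.

(* h = Lie algebra of the stabilizer H of X *)
Definition in_h (n k : nat) (X : 'M[R]_(n, k)) (O : 'M[R]_n) (P : 'M[R]_k) : Prop :=
  in_g O P /\ O *m X = X *m P.

Definition in_p (n k : nat) (X : 'M[R]_(n, k)) (O : 'M[R]_n) (P : 'M[R]_k) : Prop :=
  in_g O P /\ forall (O' : 'M[R]_n) (P' : 'M[R]_k), in_h X O' P' -> gip O P O' P' = 0.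

Definition iotaX (n k : nat) (X : 'M[R]_(n, k)) (Q : 'M[R]_n) (T : 'M[R]_k) : 'M[R]_(n, k) :=
  Q *m X *m T^T.

Definition Adm (n : nat) (g A : 'M[R]_n) : 'M[R]_n := g *m A *m invmx g.

Definition horizontal_lift (n k : nat) (X : 'M[R]_(n, k)) (bhat : R -> 'M[R]_(n, k))
    (q1 : R -> 'M[R]_n) (q2 : R -> 'M[R]_k) : Prop :=
  (forall t, orth (q1 t) /\ orth (q2 t)) /\
  (forall t, iotaX X (q1 t) (q2 t) = bhat t) /\
  (forall t, derivable q1 t 1 /\ derivable q2 t 1) /\
  (forall t, in_p X (invmx (q1 t) *m derive1 q1 t) (invmx (q2 t) *m derive1 q2 t)).

End Defs.

From HB Require Import structures.
From mathcomp Require Import all_boot all_order all_algebra.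
From mathcomp Require Import all_classical all_reals all_analysis.
From mathcomp Require Import ring.

Set Implicit Arguments.
Unset Strict Implicit.
Unset Printing Implicit Defensive.

Import Order.TTheory GRing.Theory Num.Theory.
Import numFieldNormedType.Exports.
Local Open Scope classical_set_scope.
Local Open Scope ring_scope.

(* The matrix exponential is handled entrywise: each entry of [expm (t *: A)]
   is a real power series in [t] whose coefficients are dominated by those of
   [exp (n |A| t)], so it converges everywhere and can be differentiated term
   by term, which gives [d/dt expm (t A) = A expm (t A)].  Hence
   [expm (- t A) expm (t A)] is constant, so [expm (t A)] is invertible with
   inverse [expm (- t A)], and it is orthogonal when [A] is skew-symmetric.
   The product rule then gives [q' = q Ad_{exp (t xi_h)} xi_p].  The lift is
   horizontal because conjugation by the stabilizer element [exp (t xi_h)]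
   preserves [h] and the trace form, hence also [p = h^perp]; and it lies over
   [bhat] because [exp (- t xi_h)] fixes [X]. *)

Section matrix_limits.
Variable R : realType.
Context {T : Type} (F : set_system T).

Lemma cvg_mxP {FF : Filter F} m n (u : T -> 'M[R]_(m, n)) (L : 'M[R]_(m, n)) :
  u @ F --> L <-> forall i j, (fun x => u x i j) @ F --> L i j.
Proof.
split=> [uL i j|uL]; first exact: cvg_comp uL (@coord_continuous R m n i j L).
apply/cvgrPdist_le => e e0; near=> x.
rewrite /Num.Def.normr /= mx_normrE (bigmax_le _ (ltW e0)) //= => -[i j] _.
rewrite !mxE /=; move: i j; near: x.
apply: filter_forall => i; apply: filter_forall => j.
exact: (cvgrPdist_le _ _).1 (uL i j) e e0.
Unshelve. all: by end_near. Qed.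

Lemma cvg_sumr {FF : Filter F} (I : Type) (r : seq I) (f : I -> T -> R)
    (a : I -> R) :
  (forall i, f i x @[x --> F] --> a i) ->
  \sum_(i <- r) f i x @[x --> F] --> \sum_(i <- r) a i.
Proof. by move=> fa; apply: (cvg_big add_continuous) => // i _; exact: fa. Qed.

Lemma cvg_mulmxr {FF : Filter F} m p n (u : T -> 'M[R]_(m, p))
    (L : 'M[R]_(m, p)) (M : 'M[R]_(p, n)) :
  u @ F --> L -> (fun x => u x *m M) @ F --> L *m M.
Proof.
move/cvg_mxP => uL; apply/cvg_mxP => i j.
under eq_cvg do rewrite mxE.
by rewrite mxE; apply: cvg_sumr => l; apply: cvgM; [exact: uL|exact: cvg_cst].
Qed.

Lemma cvg_mulmxl {FF : Filter F} m p n (u : T -> 'M[R]_(p, n))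
    (L : 'M[R]_(p, n)) (M : 'M[R]_(m, p)) :
  u @ F --> L -> (fun x => M *m u x) @ F --> M *m L.
Proof.
move/cvg_mxP => uL; apply/cvg_mxP => i j.
under eq_cvg do rewrite mxE.
by rewrite mxE; apply: cvg_sumr => l; apply: cvgM; [exact: cvg_cst|exact: uL].
Qed.

End matrix_limits.

Section exp_dominated.
Variable R : realType.

Definition exp_dominated (c : R^nat) (a C : R) :=
  forall k, `|c k| <= a * (C ^+ k / k`!%:R).

Lemma exp_dominated_cvg c a C x : 0 <= C -> exp_dominated c a C ->
  cvgn (pseries c x).
Proof.
move=> C0 cdom.
have a0 : 0 <= a.
  by have := cdom 0%N; rewrite expr0 fact0 divr1 mulr1; apply: le_trans.
apply: normed_cvg.
apply: (@series_le_cvg R _ (fun k => a * exp_coeff (C * `|x|) k)).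
- by move=> k /=; exact: normr_ge0.
- by move=> k; apply: mulr_ge0 => //; apply/exp_coeff_ge0/mulr_ge0.
- move=> k /=; rewrite /exp_coeff /= normrM normrX exprMn.
  rewrite (_ : a * _ = a * (C ^+ k / k`!%:R) * `|x| ^+ k); last by ring.
  by apply: ler_wpM2r; [exact: exprn_ge0|exact: cdom].
- exact: is_cvg_seriesZ (is_cvg_series_exp_coeff _).
Qed.

Lemma exp_dominated_diffs c a C : 0 <= C -> exp_dominated c a C ->
  exp_dominated (pseries_diffs c) (a * C) C.
Proof.
move=> C0 cdom k; rewrite /pseries_diffs normrM ger0_norm //.
have -> : a * C * (C ^+ k / k`!%:R) = k.+1%:R * (a * (C ^+ k.+1 / k.+1`!%:R)).
  rewrite factS natrM invfM exprS; field.
  by rewrite pnatr_eq0 -lt0n fact_gt0 addrC natr1 pnatr_eq0.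
exact: ler_wpM2l (cdom k.+1).
Qed.

End exp_dominated.

Section matrix_derivatives.
Variable R : realType.
Implicit Types t : R.

Lemma is_derive_mxP m n (f : R -> 'M[R]_(m, n)) t (D : 'M[R]_(m, n)) :
  is_derive t 1 f D <-> forall i j, is_derive t 1 (fun s => f s i j) (D i j).
Proof.
split=> [[df <-] i j|fD].
  have dfij := (derivable_mxP f t 1).1 df i j.
  by apply: DeriveDef => //; rewrite derive_mx // mxE.
have df : derivable f t 1 by apply/derivable_mxP => i j; case: (fD i j).
apply: DeriveDef => //; rewrite derive_mx //; apply/matrixP => i j.
by rewrite mxE; case: (fD i j).
Qed.

Lemma is_derive_mulmx m p n (f : R -> 'M[R]_(m, p)) (g : R -> 'M[R]_(p, n))
    t df dg :
  is_derive t 1 f df -> is_derive t 1 g dg ->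
  is_derive t 1 (fun s => f s *m g s) (df *m g t + f t *m dg).
Proof.
move=> /is_derive_mxP fdf /is_derive_mxP gdg; apply/is_derive_mxP => i j.
have -> : (fun s => (f s *m g s) i j) =
    \sum_(l < p) ((fun s => f s i l) * (fun s => g s l j)).
  by apply/funext => s; rewrite mxE fct_sumE.
have -> : (df *m g t + f t *m dg) i j =
    \sum_(l < p) (f t i l *: dg l j + g t l j *: df i l).
  rewrite !mxE -big_split /=; apply: eq_bigr => l _.
  by rewrite addrC [_ *: df i l]mulrC.
by apply: is_derive_sum => l; apply: is_deriveM.
Qed.

Lemma is_derive0_mx_cst m n (f : R -> 'M[R]_(m, n)) s t :
  (forall t, is_derive t 1 f 0) -> f s = f t.
Proof.
move=> f'0; apply/matrixP => i j.
apply: (@is_derive_0_is_cst _ (fun s => f s i j)) => x.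
by have /is_derive_mxP/(_ i j) := f'0 x; rewrite mxE.
Qed.

End matrix_derivatives.

Section matrix_exponential.
Variable R : realType.
Implicit Types t : R.

Lemma normr_mx_entry_le m n (A : 'M[R]_(m, n)) i j : `|A i j| <= `|A|.
Proof.
rewrite [leRHS]/Num.Def.normr /= mx_normrE.
exact: le_bigmax _ (fun ij : 'I_m * 'I_n => `|A ij.1 ij.2|) (i, j).
Qed.

Lemma normr_exprmx_entry_le n (A : 'M[R]_n) k i j :
  `|(A ^+ k) i j| <= (n%:R * `|A|) ^+ k.
Proof.
elim: k i j => [|k IHk] i j.
  by rewrite !expr0 mxE; case: (i == j); rewrite ?normr1 ?normr0.
rewrite exprS -mulmxE mxE exprS -mulrA mulr_natl.
apply: le_trans (ler_norm_sum _ _ _) _.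
rewrite -[X in X *+ n]mulr1 -[n in _ *+ n]card_ord -sumr_const.
apply: ler_sum => l _; rewrite normrM mulr1.
by apply: ler_pM => //; exact: normr_mx_entry_le.
Qed.

Definition expm_coef n (A : 'M[R]_n) i j (k : nat) : R :=
  (k`!%:R)^-1 * (A ^+ k) i j.

Lemma expm_coef_dominated n (A : 'M[R]_n) i j :
  exp_dominated (expm_coef A i j) 1 (n%:R * `|A|).
Proof.
move=> k; rewrite /expm_coef mul1r normrM ger0_norm ?invr_ge0 // mulrC.
by apply: ler_wpM2r; [rewrite invr_ge0|exact: normr_exprmx_entry_le].
Qed.

Lemma cvg_pseries_expm_coef n (A : 'M[R]_n) i j t :
  cvgn (pseries (expm_coef A i j) t).
Proof. exact: exp_dominated_cvg (mulr_ge0 _ _) (expm_coef_dominated A i j). Qed.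

Lemma exprZmx n t (A : 'M[R]_n) k : (t *: A) ^+ k = t ^+ k *: A ^+ k.
Proof.
elim: k => [|k IHk]; first by rewrite !expr0 scale1r.
by rewrite !exprS IHk -!mulmxE -scalemxAl -scalemxAr scalerA.
Qed.

Definition expm_partial n (A : 'M[R]_n) : nat -> 'M[R]_n :=
  series (fun k => (k`!%:R)^-1 *: A ^+ k).

Lemma expm_partial_entry n (A : 'M[R]_n) t i j N :
  expm_partial (t *: A) N i j =
  pseries (expm_coef A i j) t N.
Proof.
rewrite /series /pseries /= summxE; apply: eq_bigr => k _.
by rewrite exprZmx !mxE /expm_coef mulrA mulrAC.
Qed.

Lemma cvg_expm n (A : 'M[R]_n) : expm_partial A @ \oo --> expm A.
Proof.
apply/cvg_ex; exists (\matrix_(i, j) limn (pseries (expm_coef A i j) 1)).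
apply/cvg_mxP => i j; rewrite mxE.
have -> : (fun N => expm_partial A N i j) = pseries (expm_coef A i j) 1.
  by apply/funext => N; rewrite -expm_partial_entry scale1r.
exact: cvg_pseries_expm_coef.
Qed.

Lemma expm_entry n (A : 'M[R]_n) t i j :
  expm (t *: A) i j = limn (pseries (expm_coef A i j) t).
Proof.
apply/esym/cvg_lim => //.
have -> : pseries (expm_coef A i j) t = (fun N => expm_partial (t *: A) N i j).
  by apply/funext => N; rewrite expm_partial_entry.
by have /cvg_mxP := cvg_expm (A := t *: A); apply.
Qed.

Lemma expm0 n : expm (0 : 'M[R]_n) = 1%:M.
Proof.
apply: lim_near_cst => //; near=> N; rewrite -[N]prednK; last by near: N.
rewrite /series /= big_nat_recl // big1 ?addr0 ?expr0 ?fact0 ?invr1 ?scale1r //.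
by move=> i _; rewrite expr0n scaler0.
Unshelve. all: by end_near. Qed.

Lemma limn_pseries_diffs_expm_coef n (A : 'M[R]_n) t i j :
  limn (pseries (pseries_diffs (expm_coef A i j)) t) = (A *m expm (t *: A)) i j.
Proof.
apply: cvg_lim => //.
have -> : pseries (pseries_diffs (expm_coef A i j)) t =
    (fun N => \sum_(l < n) A i l * pseries (expm_coef A l j) t N).
  apply/funext => N; rewrite /pseries /series /=.
  under [RHS]eq_bigr do rewrite mulr_sumr.
  rewrite exchange_big /=; apply: eq_bigr => k _.
  have factS_inv : k.+1%:R * (k.+1`!%:R)^-1 = (k`!%:R)^-1 :> R.
    by rewrite factS natrM invfM mulrA mulfV ?mul1r // pnatr_eq0.
  rewrite /pseries_diffs /expm_coef exprS -mulmxE mxE mulrA factS_inv.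
  by rewrite mulr_sumr mulr_suml; apply: eq_bigr => l _; ring.
rewrite mxE; apply: cvg_sumr => l; apply: cvgM; first exact: cvg_cst.
by rewrite expm_entry; exact: cvg_pseries_expm_coef.
Qed.

Lemma is_derive_expm n (A : 'M[R]_n) t :
  is_derive t 1 (fun s => expm (s *: A)) (A *m expm (t *: A)).
Proof.
apply/is_derive_mxP => i j; rewrite -limn_pseries_diffs_expm_coef.
under eq_fun do rewrite expm_entry.
have dom := expm_coef_dominated A i j; have C0 : 0 <= n%:R * `|A| by [].
apply: (@pseries_snd_diffs _ _ (`|t| + 1)).
- exact: cvg_pseries_expm_coef.
- exact: exp_dominated_cvg C0 (exp_dominated_diffs C0 dom).
- have dom' := exp_dominated_diffs C0 dom.
  exact: exp_dominated_cvg C0 (exp_dominated_diffs C0 dom').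
- by rewrite [ltRHS]ger0_norm ?addr_ge0 // ltrDl.
Qed.

End matrix_exponential.

Section expm_algebra.
Variable R : realType.
Implicit Types t : R.

Lemma exprmx_intertwine m n (A : 'M[R]_m) (B : 'M[R]_n) (X : 'M[R]_(m, n)) k :
  A *m X = X *m B -> A ^+ k *m X = X *m B ^+ k.
Proof.
move=> AXB; elim: k => [|k IHk]; first by rewrite !expr0 mul1mx mulmx1.
by rewrite !exprS -!mulmxE -mulmxA IHk !mulmxA AXB.
Qed.

Lemma expm_intertwine m n (A : 'M[R]_m) (B : 'M[R]_n) (X : 'M[R]_(m, n)) :
  A *m X = X *m B -> expm A *m X = X *m expm B.
Proof.
move=> AXB; have SAX : (fun N => X *m expm_partial B N) @ \oo --> expm A *m X.
  have -> : (fun N => X *m expm_partial B N) = (fun N => expm_partial A N *m X).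
    apply/funext => N; rewrite /expm_partial /series /= mulmx_suml mulmx_sumr.
    apply: eq_bigr => k _.
    by rewrite -scalemxAl -scalemxAr (exprmx_intertwine _ AXB).
  by apply: cvg_mulmxr; exact: cvg_expm.
apply: cvg_unique _ SAX _ => //; apply: cvg_mulmxl; exact: cvg_expm.
Qed.

Lemma expmZ_intertwine m n (A : 'M[R]_m) (B : 'M[R]_n) (X : 'M[R]_(m, n)) t :
  A *m X = X *m B -> expm (t *: A) *m X = X *m expm (t *: B).
Proof.
by move=> AXB; apply: expm_intertwine; rewrite -scalemxAl -scalemxAr AXB.
Qed.

Lemma trmxX n (A : 'M[R]_n) k : (A ^+ k)^T = A^T ^+ k.
Proof.
elim: k => [|k IHk]; first by rewrite !expr0 trmx1.
by rewrite [in LHS]exprS [in RHS]exprSr -!mulmxE trmx_mul IHk.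
Qed.

Lemma trmx_expm n (A : 'M[R]_n) : (expm A)^T = expm A^T.
Proof.
have expm_entry1 (B : 'M[R]_n) i j :
    expm B i j = limn (pseries (expm_coef B i j) 1).
  by rewrite -expm_entry scale1r.
apply/matrixP => i j; rewrite mxE !expm_entry1; congr (limn (pseries _ 1)).
by apply/funext => k; rewrite /expm_coef -trmxX mxE.
Qed.

Lemma expmN_mulmx n (A : 'M[R]_n) t : expm (t *: - A) *m expm (t *: A) = 1%:M.
Proof.
have -> : 1%:M = expm (0 *: - A) *m expm (0 *: A).
  by rewrite !scale0r expm0 mulmx1.
apply: (is_derive0_mx_cst (f := fun s => expm (s *: - A) *m expm (s *: A))).
move=> s.
have NAA : expm (s *: - A) *m A = A *m expm (s *: - A).
  by apply: expmZ_intertwine; rewrite mulNmx mulmxN.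
have := is_derive_mulmx (is_derive_expm (- A) s) (is_derive_expm A s).
by rewrite mulmxA NAA !mulNmx addNr.
Qed.

Lemma expm_mulmxN n (A : 'M[R]_n) t : expm (t *: A) *m expm (t *: - A) = 1%:M.
Proof. exact: mulmx1C (expmN_mulmx A t). Qed.

Lemma invmx_expm n (A : 'M[R]_n) t : invmx (expm (t *: A)) = expm (t *: - A).
Proof.
have [Aunit _] := mulmx1_unit (expm_mulmxN A t).
by rewrite -[RHS]mul1mx -(mulVmx Aunit) -mulmxA expm_mulmxN mulmx1.
Qed.

Lemma trmx_expm_skew n (A : 'M[R]_n) t :
  skew_sym A -> (expm (t *: A))^T = expm (t *: - A).
Proof. by move=> skA; rewrite trmx_expm linearZ /= skA. Qed.

Lemma orth_expm n (A : 'M[R]_n) t : skew_sym A -> orth (expm (t *: A)).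
Proof. by move=> skA; rewrite /orth trmx_expm_skew // expmN_mulmx. Qed.

Lemma orthM n (M N : 'M[R]_n) : orth M -> orth N -> orth (M *m N).
Proof.
by rewrite /orth => MTM NTN; rewrite trmx_mul mulmxA -(mulmxA N^T) MTM mulmx1.
Qed.

Lemma orth_unitmx n (M : 'M[R]_n) : orth M -> M \in unitmx.
Proof. by move/mulmx1_unit => []. Qed.

Lemma is_derive_expm_mulmx_expmN m (A B : 'M[R]_m) t :
  is_derive t 1 (fun s => expm (s *: A) *m expm ((- s) *: B))
    (expm (t *: A) *m expm ((- t) *: B) *m Adm (expm (t *: B)) (A - B)).
Proof.
under eq_fun do rewrite scaleNr -scalerN.
rewrite /Adm invmx_expm scaleNr -scalerN.
have AA : expm (t *: A) *m A = A *m expm (t *: A) by apply: expmZ_intertwine.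
rewrite !mulmxA -(mulmxA (expm (t *: A)) (expm (t *: - B))) expmN_mulmx mulmx1.
rewrite mulmxBr mulmxBl AA -(mulmxA _ B) -mulmxN -mulNmx.
exact: is_derive_mulmx (is_derive_expm A t) (is_derive_expm (- B) t).
Qed.

End expm_algebra.

Section horizontal_lift.
Variable R : realType.
Variables (n k : nat) (X : 'M[R]_(n, k)).
Implicit Types t : R.

Lemma skew_sym_conj m (M P : 'M[R]_m) :
  skew_sym P -> skew_sym (M^T *m P *m M).
Proof.
by move=> skP; rewrite /skew_sym !trmx_mul trmxK skP mulNmx mulmxN mulmxA.
Qed.

Lemma gip_conj (M1 O O' : 'M[R]_n) (M2 P P' : 'M[R]_k) :
  gip (M1 *m O *m M1^T) (M2 *m P *m M2^T) O' P' =
  gip O P (M1^T *m O' *m M1) (M2^T *m P' *m M2).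
Proof.
by rewrite /gip -!mulmxA (mxtrace_mulC M1) (mxtrace_mulC M2) !mulmxA.
Qed.

Lemma in_h_conj (M1 O : 'M[R]_n) (M2 P : 'M[R]_k) :
  M1 *m X = X *m M2 -> M1^T *m X = X *m M2^T -> in_h X O P ->
  in_h X (M1^T *m O *m M1) (M2^T *m P *m M2).
Proof.
move=> M1X M1TX [[skO skP] OXP]; split; first by split; apply: skew_sym_conj.
by rewrite -!mulmxA M1X (mulmxA O) OXP -mulmxA (mulmxA M1^T) M1TX !mulmxA.
Qed.

Lemma in_p_conj (M1 O : 'M[R]_n) (M2 P : 'M[R]_k) :
  M1 *m X = X *m M2 -> M1^T *m X = X *m M2^T -> in_p X O P ->
  in_p X (M1 *m O *m M1^T) (M2 *m P *m M2^T).
Proof.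
move=> M1X M1TX [[skO skP] Operp]; split.
  by split; [rewrite -{1}[M1]trmxK|rewrite -{1}[M2]trmxK]; apply: skew_sym_conj.
by move=> O' P' hO'P'; rewrite gip_conj; apply/Operp/in_h_conj.
Qed.

Lemma Adm_expm_skew m (A P : 'M[R]_m) t : skew_sym A ->
  Adm (expm (t *: A)) P = expm (t *: A) *m P *m (expm (t *: A))^T.
Proof. by move=> skA; rewrite /Adm invmx_expm trmx_expm_skew. Qed.

Lemma in_p_Adm_expm (A O : 'M[R]_n) (B P : 'M[R]_k) t :
  in_h X A B -> in_p X O P ->
  in_p X (Adm (expm (t *: A)) O) (Adm (expm (t *: B)) P).
Proof.
move=> [[skA skB] AXB] OPp; rewrite !Adm_expm_skew //.
apply: in_p_conj OPp; first exact: expmZ_intertwine.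
rewrite !trmx_expm_skew //; apply: expmZ_intertwine.
by rewrite mulNmx mulmxN AXB.
Qed.

Lemma in_h_expm_stab (A : 'M[R]_n) (B : 'M[R]_k) t :
  in_h X A B -> expm (t *: A) *m X *m (expm (t *: B))^T = X.
Proof.
move=> [[_ skB] AXB]; rewrite (expmZ_intertwine _ AXB) -mulmxA.
by rewrite trmx_expm_skew // expm_mulmxN mulmx1.
Qed.

Lemma iotaX_mulmx_stab (Q M1 : 'M[R]_n) (T M2 : 'M[R]_k) :
  M1 *m X *m M2^T = X -> iotaX X (Q *m M1) (T *m M2) = iotaX X Q T.
Proof. by move=> stab; rewrite /iotaX trmx_mul !mulmxA -!(mulmxA Q) stab. Qed.

Lemma iotaX_expm_skew (A : 'M[R]_n) (B : 'M[R]_k) t : skew_sym B ->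
  iotaX X (expm (t *: A)) (expm (t *: B)) =
  expm (t *: A) *m X *m expm ((- t) *: B).
Proof. by move=> skB; rewrite /iotaX trmx_expm_skew // scaleNr scalerN. Qed.

End horizontal_lift.

Theorem lemma5p12 (R : realType) (n k : nat) (X : 'M[R]_(n, k))
    (xi1 : 'M[R]_n) (xi2 : 'M[R]_k) (xh1 : 'M[R]_n) (xh2 : 'M[R]_k) :
  stiefel X ->
  skew_sym xi1 -> skew_sym xi2 ->
  (* (xh1, xh2) = xi_h and (xi1 - xh1, xi2 - xh2) = xi_p : the components of xi
     in the decomposition g = h (+) p *)
  in_h X xh1 xh2 -> in_p X (xi1 - xh1) (xi2 - xh2) ->
  let bhat := fun t : R => iotaX X (expm (t *: xi1)) (expm (t *: xi2)) in
  let q1 := fun t : R => expm (t *: xi1) *m expm ((- t) *: xh1) in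
  let q2 := fun t : R => expm (t *: xi2) *m expm ((- t) *: xh2) in
  (forall t : R, bhat t = expm (t *: xi1) *m X *m expm ((- t) *: xi2)) /\
  (q1 0 = 1%:M /\ q2 0 = 1%:M) /\
  horizontal_lift X bhat q1 q2 /\
  (forall t : R,
     derivable q1 t 1 /\ derivable q2 t 1 /\
     derive1 q1 t = q1 t *m Adm (expm (t *: xh1)) (xi1 - xh1) /\
     derive1 q2 t = q2 t *m Adm (expm (t *: xh2)) (xi2 - xh2)).
Proof.
move=> _ skxi1 skxi2 xih xip bhat q1 q2.
have [[skxh1 skxh2] _] := xih.
have dq1 (t : R) : is_derive t 1 q1 (q1 t *m Adm (expm (t *: xh1)) (xi1 - xh1)).
  exact: is_derive_expm_mulmx_expmN.
have dq2 (t : R) : is_derive t 1 q2 (q2 t *m Adm (expm (t *: xh2)) (xi2 - xh2)).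
  exact: is_derive_expm_mulmx_expmN.
have q'E (t : R) : derive1 q1 t = q1 t *m Adm (expm (t *: xh1)) (xi1 - xh1) /\
                   derive1 q2 t = q2 t *m Adm (expm (t *: xh2)) (xi2 - xh2).
  by rewrite !derive1E; split; apply: derive_val.
have q_derivable (t : R) : derivable q1 t 1 /\ derivable q2 t 1.
  by split; [case: (dq1 t)|case: (dq2 t)].
have orth_q (t : R) : orth (q1 t) /\ orth (q2 t).
  by split; apply: orthM; apply: orth_expm.
split; first by move=> t; exact: iotaX_expm_skew.
split; first by split; rewrite /q1 /q2 oppr0 !scale0r expm0 mulmx1.
split; last by move=> t; have [? ?] := q_derivable t; have [? ?] := q'E t.
split=> //; split; first by move=> t; rewrite iotaX_mulmx_stab ?in_h_expm_stab.
split=> // t; have [-> ->] := q'E t; have [oq1 oq2] := orth_q t.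
by rewrite !mulKmx ?orth_unitmx //; exact: in_p_Adm_expm xih xip.
Qed.
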